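(* Let $(P,A,\lambda)$ be a marked poset and let $(U_1,U_2)$ and $(V_1,V_2)$ be two different admissible decompositions of it. If $U_1\cap\operatorname{St}(P)=V_1\cap\operatorname{St}(P)$, then the marked chain-order polytopes $\mathcal{CO}_{U_1,U_2}(\lambda)$ and $\mathcal{CO}_{V_1,V_2}(\lambda)$ are unimodular equivalent.
   Context: A marked poset is a triple $(P,A,\lambda)$ where $(P,\prec)$ is a finite poset, $A\subseteq P$ contains all minimal and all maximal elements of $P$, and $\lambda:A\to\mathbb{Z}_{\ge 0}$, $a\mapsto\lambda_a$. For $p,q\in P$ write $q\to p$ (''$p$ covers $q$'') if $q\prec p$ and there is no $r$ with $q\prec r\prec p$. Let $p\to$ denote the set of elements covering $p$, and $\rightsquigarrow p$ the set of maximal chains ending in $p$, i.e. chains $r_0\to r_1\to\cdots\to r_k=p$ with $r_0$ minimal in $P$. An element $p\in P$ is a star element if $|p\to|\ge 2$ and $|\rightsquigarrow p|\ge 2$; $\operatorname{St}(P)$ is the set of star elements. A decomposition of $(P,A,\lambda)$ is a pair $(U_1,U_2)$ of disjoint sets with $U_1\cup U_2=P\setminus A$; it is admissible if there are no $u_1\in U_1$, $u_2\in U_2$ with $u_1\prec u_2$. Put $A_1=A\cup U_1$. The marked chain-order polytope $\mathcal{CO}_{U_1,U_2}(\lambda)\subset\mathbb{R}^{P\setminus A}$ is the set of $(x_p)_{p\in P\setminus A}$ such that: (i) $x_p\le\lambda_a$ whenever $p\in U_1$, $a\in A$, $p\prec a$; (ii) $\lambda_b\le x_q$ whenever $q\in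 U_1$, $b\in A$, $b\prec q$; (iii) $x_p\le x_q$ whenever $p,q\in U_1$, $p\prec q$; (iv) $x_p\ge0$ for $p\in U_2$; (v) for every chain $b\prec p_n\prec\cdots\prec p_1\prec a$ with $n\ge1$, $a,b\in A_1$, $p_i\in U_2$: $x_{p_1}+\cdots+x_{p_n}\le\lambda_a-\lambda_b$, where $\lambda_q$ means $x_q$ for $q\in U_1$; (vi) for every chain $p_1\prec\cdots\prec p_s\prec q$ with $q\in U_1$, $p_i\in U_2$: $x_{p_1}+\cdots+x_{p_s}\le x_q$. *)

From HB Require Import structures.
From mathcomp Require Import all_boot all_order all_algebra.
From mathcomp Require Import reals.
Set Implicit Arguments. Unset Strict Implicit. Unset Printing Implicit Defensive.
Import Order.TTheory GRing.Theory Num.Theory.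

Section MarkedPoset.
Variables (d : Order.disp_t) (T : finPOrderType d).

Local Open Scope order_scope.

Definition covers (q p : T) : bool :=
  (q < p) && [forall r : T, ~~ ((q < r) && (r < p))].

Definition minimal (p : T) : bool := [forall q : T, ~~ (q < p)].
Definition maximal (p : T) : bool := [forall q : T, ~~ (p < q)].

Definition up_covers (p : T) : {set T} := [set q | covers p q].

Definition max_chain_to (p : T) (s : seq T) : Prop :=
  match s with
  | [::] => False
  | r0 :: rest => [/\ minimal r0, path covers r0 rest & last r0 rest = p]
  end.

(* p is a star element: |p ->| >= 2 and |~> p| >= 2 *)
Definition star_elem (p : T) : Prop :=
  (2 <= #|up_covers p|)%N /\
  exists s1 s2 : seq T, [/\ s1 <> s2, max_chain_to p s1 & max_chain_to p s2].

Definition marked_poset (A : {set T}) : Prop :=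
  forall p : T, (minimal p || maximal p) -> p \in A.

Definition decomposition (A U1 U2 : {set T}) : Prop :=
  [disjoint U1 & U2] /\ U1 :|: U2 = ~: A.

Definition admissible (U1 U2 : {set T}) : Prop :=
  forall u1 u2 : T, u1 \in U1 -> u2 \in U2 -> ~ (u1 < u2).

Definition coord (A : {set T}) := {p : T | p \notin A}.

End MarkedPoset.

Section Polytope.
Variables (R : realType) (d : Order.disp_t) (T : finPOrderType d).
Variables (A : {set T}) (lam : T -> nat).

Local Open Scope ring_scope.

Definition ext (x : coord A -> R) (q : T) : R :=
  match insub q with
  | Some s => x s
  | None => (lam q)%:R
  end.

Definition chain_order_polytope (U1 U2 : {set T}) (x : coord A -> R) : Prop :=
  [/\
      (forall (p a : T), p \in U1 -> a \in A -> (p < a)%O -> ext x p <= (lam a)%:R),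
      (forall (q b : T), q \in U1 -> b \in A -> (b < q)%O -> (lam b)%:R <= ext x q),
      (forall (p q : T), p \in U1 -> q \in U1 -> (p < q)%O -> ext x p <= ext x q),
      (forall p : T, p \in U2 -> 0 <= ext x p) &
      (forall (a b : T) (ps : seq T), a \in A :|: U1 -> b \in A :|: U1 ->
         ps != [::] -> all (fun p => p \in U2) ps ->
         sorted (fun u v => (u < v)%O) (b :: rcons ps a) ->
         \sum_(p <- ps) ext x p <= ext x a - ext x b)] /\
      (forall (q : T) (ps : seq T), q \in U1 ->
         ps != [::] -> all (fun p => p \in U2) ps ->
         sorted (fun u v => (u < v)%O) (rcons ps q) ->
         \sum_(p <- ps) ext x p <= ext x q).

Definition unimodular_equiv (Q1 Q2 : (coord A -> R) -> Prop) : Prop :=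
  exists (M N : coord A -> coord A -> int) (b : coord A -> int),
    [/\ (forall i j, \sum_k M i k * N k j = (i == j)%:Z),
        (forall i j, \sum_k N i k * M k j = (i == j)%:Z)
      & (forall y : coord A -> R,
           Q2 y <-> exists x : coord A -> R,
             Q1 x /\ forall i, y i = \sum_j (M i j)%:~R * x j + (b i)%:~R)].

End Polytope.

From Pilot Require Import Defs.
From HB Require Import structures.
From mathcomp Require Import all_boot all_order all_algebra.
From mathcomp Require Import reals.
From mathcomp Require Import lra.
From Stdlib Require Import FunctionalExtensionality.
Set Implicit Arguments. Unset Strict Implicit. Unset Printing Implicit Defensive.
Import Order.TTheory GRing.Theory Num.Theory.

(* Let p be minimal in U1 and not a star element.  Inside CO_{U1,U2} the coordinate x_p
   only meets the constraints L <= x_p <= U, where U is the least value x_a or lambda_a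
   above p and L the largest lambda_b + sum_{r in X} x_r over chains b < X < p with b
   marked and X in U2.  After moving p to U2 it meets 0 <= x_p <= U - L instead.  As p is
   not a star element, either p has a single upper cover c, and U is the single term x_c
   or min {lambda_a | a >= c}, so x_p |-> U - x_p is a unimodular bijection; or the
   elements below p form a chain, L is a single affine form, and x_p |-> x_p - L works.
   The elements of U1 \ V1 are not star elements, so removing them from U1 one at a
   time, always a minimal one, relates CO_{U1,U2} to the polytope of U1 n V1; the same
   holds for V1. *)

Section IntegralAffineMaps.
Variable I : finType.
Local Open Scope ring_scope.
Implicit Types M N : I -> I -> int.

Definition mx_mul M N : I -> I -> int := fun i j => \sum_k M i k * N k j.
Definition mx_id : I -> I -> int := fun i j => (i == j)%:Z.
Definition mx_inverse M N := forall i j, mx_mul M N i j = mx_id i j.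

Definition affine_map {R : pzRingType} M (b : I -> int) (x : I -> R) : I -> R :=
  fun i => \sum_j (M i j)%:~R * x j + (b i)%:~R.

Lemma sum_delta_mull {R : pzRingType} i (f : I -> R) :
  \sum_j (i == j)%:R * f j = f i.
Proof.
rewrite (bigD1 i) //= eqxx mul1r big1 ?addr0 // => j /negbTE ji.
by rewrite eq_sym ji mul0r.
Qed.

Lemma sum_delta_mulr {R : pzRingType} j (f : I -> R) :
  \sum_i f i * (i == j)%:R = f j.
Proof.
rewrite (bigD1 j) //= eqxx mulr1 big1 ?addr0 // => i /negbTE ij.
by rewrite ij mulr0.
Qed.

Lemma mx_inverse_id : mx_inverse mx_id mx_id.
Proof.
by move=> i j; rewrite /mx_mul /mx_id; under eq_bigr do rewrite -natz; rewrite sum_delta_mull.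
Qed.

Lemma mx_inverse_mul M N M' N' :
  mx_inverse M N -> mx_inverse M' N' -> mx_inverse (mx_mul M' M) (mx_mul N N').
Proof.
move=> hMN hMN' i j; rewrite /mx_mul.
under eq_bigr => k _ do rewrite mulr_suml.
rewrite exchange_big /=.
under eq_bigr => l _ do under eq_bigr => k _ do rewrite -mulrA.
under eq_bigr => l _ do rewrite -mulr_sumr.
have inner l : \sum_k M l k * \sum_m N k m * N' m j = N' l j.
  under eq_bigr do rewrite mulr_sumr.
  rewrite exchange_big /=.
  under eq_bigr => m _ do under eq_bigr => k _ do rewrite mulrA.
  under eq_bigr => m _ do rewrite -mulr_suml [\sum_k _]hMN /mx_id -natz.
  exact: sum_delta_mull.
under eq_bigr do rewrite inner.
exact: hMN'.
Qed.

Definition inv_shift N (b : I -> int) : I -> int := fun i => - \sum_k N i k * b k.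

Section Action.
Variable R : pzRingType.
Implicit Types x : I -> R.

Lemma affine_mapM M b M' b' x :
  affine_map M' b' (affine_map M b x) = affine_map (mx_mul M' M) (affine_map M' b' b) x.
Proof.
apply: functional_extensionality => i; rewrite /affine_map /mx_mul.
rewrite [in RHS]rmorphD rmorph_sum intz /= addrA; congr (_ + _).
under eq_bigr do rewrite mulrDr.
rewrite big_split /=; congr (_ + _); last first.
  by apply: eq_bigr => k _; rewrite intz rmorphM.
under eq_bigr do rewrite mulr_sumr.
rewrite exchange_big /=; apply: eq_bigr => j _.
rewrite rmorph_sum mulr_suml; apply: eq_bigr => k _.
by rewrite rmorphM mulrA.
Qed.

Lemma affine_map_id x : affine_map mx_id (fun=> 0) x = x.
Proof.
apply: functional_extensionality => i.
by rewrite /affine_map addr0 -[RHS](sum_delta_mull i x).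
Qed.

Lemma affine_mapK M N b :
  mx_inverse N M -> cancel (affine_map (R := R) M b) (affine_map N (inv_shift N b)).
Proof.
move=> hNM x; rewrite affine_mapM -[RHS]affine_map_id.
congr affine_map; apply: functional_extensionality => i.
  by apply: functional_extensionality => j; rewrite hNM.
rewrite /affine_map /inv_shift.
by under eq_bigr do rewrite intz; rewrite intz subrr.
Qed.

Lemma affine_mapKV M N b :
  mx_inverse M N -> cancel (affine_map (R := R) N (inv_shift N b)) (affine_map M b).
Proof.
move=> hMN y; rewrite affine_mapM -[RHS]affine_map_id.
congr affine_map; apply: functional_extensionality => i.
  by apply: functional_extensionality => j; rewrite hMN.
rewrite /affine_map /inv_shift.
under eq_bigr do rewrite intz mulrN mulr_sumr.
rewrite intz sumrN exchange_big /=.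
under eq_bigr => k _ do under eq_bigr => j _ do rewrite mulrA.
under eq_bigr => k _ do rewrite -mulr_suml [\sum_j _]hMN /mx_id -natz.
by rewrite sum_delta_mull addNr.
Qed.

End Action.

Definition shear_mx (p0 : I) (s : int) (w : I -> int) : I -> I -> int := fun i j =>
  if i == p0 then (if j == p0 then s else w j) else (i == j)%:Z.

Section Shear.
Variables (p0 : I) (s : int) (w : I -> int).
Hypotheses (s2 : s * s = 1) (w_p0 : w p0 = 0).

Lemma shear_mx_inverse :
  mx_inverse (shear_mx p0 s w) (shear_mx p0 s (fun j => - (s * w j))).
Proof.
move=> i j; rewrite /mx_mul /mx_id /shear_mx; case: (eqVneq i p0) => [->|ip]; last first.
  by under eq_bigr do rewrite -natz; rewrite sum_delta_mull (negbTE ip).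
rewrite (bigD1 p0) //= !eqxx.
under eq_bigr => k kp do rewrite (negbTE kp) -natz.
have -> : \sum_(k | k != p0) w k * (k == j)%:R = w j.
  by rewrite -(sum_delta_mulr j w) [RHS](bigD1 p0) //= w_p0 mul0r add0r.
case: (eqVneq j p0) => [->|jp]; first by rewrite s2 w_p0 addr0.
by rewrite mulrN mulrA s2 mul1r addNr.
Qed.

Lemma affine_map_shear (R : pzRingType) (beta : int) (x : I -> R) i :
  affine_map (R := R) (shear_mx p0 s w) (fun i => if i == p0 then beta else 0) x i =
  if i == p0 then s%:~R * x p0 + \sum_j (w j)%:~R * x j + beta%:~R else x i.
Proof.
rewrite /affine_map /shear_mx; case: (eqVneq i p0) => [_|_]; last first.
  by rewrite addr0 -[RHS](sum_delta_mull i x).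
rewrite (bigD1 p0) //= eqxx [\sum_j _](bigD1 p0) //= w_p0 mul0r add0r.
by congr (_ + _ + _); apply: eq_bigr => j /negbTE ->.
Qed.

End Shear.
End IntegralAffineMaps.

Section UnimodularEquivalence.
Variables (R : realType) (d : Order.disp_t) (T : finPOrderType d) (A : {set T}).
Local Open Scope ring_scope.
Notation C := (Defs.coord A). (* plain [coord] is [vector.coord] *)
Notation UE := (@unimodular_equiv R d T A).
Implicit Types (Q : (C -> R) -> Prop) (M N : C -> C -> int) (b : C -> int).

Lemma unimodular_equivP Q1 Q2 M N b :
  mx_inverse M N -> mx_inverse N M ->
  (forall x, Q1 x <-> Q2 (affine_map M b x)) -> UE Q1 Q2.
Proof.
move=> hMN hNM hQ; exists M, N, b; split => // y; split => [Q2y|[x [/hQ Q2x ey]]].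
  exists (affine_map N (inv_shift N b) y).
  by split=> [|i]; [apply/hQ; rewrite affine_mapKV | rewrite -[in LHS](affine_mapKV b hMN y)].
by have -> : y = affine_map M b x by apply: functional_extensionality.
Qed.

Lemma unimodular_equivE Q1 Q2 : UE Q1 Q2 ->
  exists M N b, [/\ mx_inverse M N, mx_inverse N M &
                   forall x, Q1 x <-> Q2 (affine_map M b x)].
Proof.
case=> M [N [b [hMN hNM hQ]]]; exists M, N, b; split => // x.
split=> [Q1x|/hQ[x' [Q1x' ex']]]; first by apply/hQ; exists x.
suff -> : x = x' by [].
apply: (can_inj (affine_mapK b hNM)); exact: functional_extensionality.
Qed.

Lemma unimodular_equiv_sym Q1 Q2 : UE Q1 Q2 -> UE Q2 Q1.
Proof.
case/unimodular_equivE=> M [N [b [hMN hNM hQ]]].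
apply: (unimodular_equivP (b := inv_shift N b) hNM hMN) => y.
by rewrite hQ affine_mapKV.
Qed.

Lemma unimodular_equiv_trans Q1 Q2 Q3 : UE Q1 Q2 -> UE Q2 Q3 -> UE Q1 Q3.
Proof.
case/unimodular_equivE=> M [N [b [hMN hNM hQ]]].
case/unimodular_equivE=> M' [N' [b' [hMN' hNM' hQ']]].
apply: (unimodular_equivP (b := affine_map M' b' b) (mx_inverse_mul hMN hMN')
          (mx_inverse_mul hNM' hNM)) => x.
by rewrite -affine_mapM -hQ'; apply: hQ.
Qed.

Lemma unimodular_equiv_refl Q : UE Q Q.
Proof.
apply: (unimodular_equivP (b := fun=> 0) (@mx_inverse_id C) (@mx_inverse_id C)) => x.
by rewrite affine_map_id.
Qed.

Lemma unimodular_equiv_shear (p0 : C) (s beta : int) (w : C -> int) Q1 Q2 :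
  s * s = 1 -> w p0 = 0 ->
  (forall x, Q1 x <-> Q2 (fun i => if i == p0
                                   then s%:~R * x p0 + \sum_j (w j)%:~R * x j + beta%:~R
                                   else x i)) ->
  UE Q1 Q2.
Proof.
move=> s2 w_p0 hQ; pose w' j := - (s * w j).
have w'_p0 : w' p0 = 0 by rewrite /w' w_p0 mulr0 oppr0.
have w'K : (fun j => - (s * w' j)) = w.
  by apply: functional_extensionality => j; rewrite /w' mulrN opprK mulrA s2 mul1r.
have := shear_mx_inverse s2 w'_p0; rewrite w'K => hNM.
apply: (unimodular_equivP (b := fun i => if i == p0 then beta else 0)
          (shear_mx_inverse s2 w_p0) hNM) => x.
rewrite hQ; split; congr Q2; apply: functional_extensionality => i;
  by rewrite affine_map_shear.
Qed.

End UnimodularEquivalence.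

Section MinimalElements.
Variables (d : Order.disp_t) (T : finPOrderType d).
Local Open Scope order_scope.

Lemma exists_minimal_in (P : pred T) x : P x -> exists2 m, P m & forall r, P r -> ~~ (r < m).
Proof.
move=> Px; case: (arg_minnP (fun m => #|[set r | r < m]|) Px) => m Pm m_min.
exists m => // r Pr; apply/negP => rm.
have := m_min r Pr; rewrite leqNgt => /negP; apply.
apply: proper_card; apply/properP; split.
  by apply/subsetP => z; rewrite !inE => /lt_trans; apply.
by exists r; rewrite !inE ?ltxx.
Qed.

End MinimalElements.

Section Chains.
Variables (d : Order.disp_t) (T : finPOrderType d).
Local Open Scope order_scope.
Implicit Types (X : {set T}) (s : seq T) (x y m p q r u v : T).

Definition is_chain X := forall u v, u \in X -> v \in X -> u != v -> (u < v) || (v < u).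

Lemma exists_maximal_in (P : pred T) x : P x -> exists2 m, P m & forall r, P r -> ~~ (m < r).
Proof. exact: (@exists_minimal_in _ T^d). Qed.

Lemma exists_minimal_le q : exists2 m, minimal m & m <= q.
Proof.
have [m mq m_min] := @exists_minimal_in _ _ (fun m => m <= q) q (lexx q).
exists m => //; apply/forallP => r; apply/negP => rm.
by move: (m_min r (ltW (lt_le_trans rm mq))); rewrite rm.
Qed.

Lemma covers_path x y : x < y -> exists s, path (@covers d T) x s /\ last x s = y.
Proof.
move: {2}#|_| (leqnn #|[set z | x < z <= y]|) => n.
elim: n x => [|n IH] x Hn xy.
  by move: Hn; rewrite leqn0 cards_eq0 => /eqP/setP/(_ y); rewrite !inE xy lexx.
have [|z /andP[xz zy] z_min] := @exists_minimal_in _ _ (fun z => x < z <= y) y.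
  by rewrite xy lexx.
have cxz : covers x z.
  rewrite /covers xz; apply/forallP => r; apply/negP => /andP[xr rz].
  by move: (z_min r); rewrite xr (ltW (lt_le_trans rz zy)) rz => /(_ isT).
case: (eqVneq z y) => [<-|zy']; first by exists [:: z]; rewrite /= cxz.
have zy2 : z < y by rewrite lt_neqAle zy' zy.
have [|s [zs <-]] := IH z _ zy2; last by exists (z :: s); rewrite /= cxz.
rewrite -ltnS; apply: leq_trans Hn; apply: proper_card; apply/properP; split.
  by apply/subsetP => r; rewrite !inE => /andP[/(lt_trans xz) -> ->].
by exists z; rewrite !inE ?ltxx ?xz ?zy.
Qed.

Lemma is_chain_pairwise s : pairwise <%O s -> is_chain [set r in s].
Proof.
move=> + u v; rewrite !inE; elim: s => //= a s IH /andP[/allP lt_a lt_s].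
rewrite !inE => /orP[/eqP->|us] /orP[/eqP->|vs]; rewrite ?eqxx // => uv.
- by rewrite lt_a.
- by rewrite lt_a ?orbT.
- exact: IH.
Qed.

Lemma is_chain_subset X (Y : {set T}) : X \subset Y -> is_chain Y -> is_chain X.
Proof. by move=> /subsetP XY Y_chain u v /XY uY /XY; apply: Y_chain. Qed.

Lemma is_chain_setU1 X p : is_chain X -> (forall r, r \in X -> (r < p) || (p < r)) ->
  is_chain (p |: X).
Proof.
move=> X_chain Xp u v; rewrite !inE.
case/orP=> [/eqP->|uX] /orP[/eqP->|vX]; rewrite ?eqxx // => uv.
- by rewrite orbC Xp.
- exact: Xp.
- exact: X_chain.
Qed.

Lemma max_chain_to_is_chain p s : max_chain_to p s -> is_chain [set r in s].
Proof.
case: s => // r0 s [_ cov_s _]; apply: is_chain_pairwise.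
rewrite -sorted_pairwise; last exact: lt_trans.
by apply: sub_path cov_s => u v /andP[].
Qed.

Lemma max_chain_to_through u p : u < p -> exists s, max_chain_to p s /\ u \in s.
Proof.
move=> up; have [m m_min mu] := exists_minimal_le u.
have [s2 [ps2 <-]] := covers_path up.
case: (eqVneq m u) => [em|mu'].
  by subst m; exists (u :: s2); split; [split | rewrite mem_head].
have mu2 : m < u by rewrite lt_neqAle mu' mu.
have [s1 [ps1 ls1]] := covers_path mu2.
exists (m :: s1 ++ s2); split; last by rewrite -cat_cons mem_cat -ls1 mem_last.
by split; rewrite ?last_cat ?cat_path ?ps1 ?ls1.
Qed.

Lemma non_star_lt_total p : ~ star_elem p -> (2 <= #|up_covers p|)%N ->
  forall u v, u < p -> v < p -> (u <= v) || (v <= u).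
Proof.
move=> nstar covers2 u v up vp; case: (eqVneq u v) => [->|uv]; first by rewrite lexx.
have [su [su_max usu]] := max_chain_to_through up.
have [sv [sv_max vsv]] := max_chain_to_through vp.
case: (boolP (v \in su)) => vsu.
  have := max_chain_to_is_chain su_max; rewrite /is_chain => /(_ u v).
  by rewrite !inE usu vsu => /(_ isT isT uv)/orP[] /ltW ->; rewrite ?orbT.
apply: False_ind (nstar _); split => //; exists su, sv; split => // esv.
by move: vsu; rewrite esv vsv.
Qed.

Lemma least_upper_of_single_cover p : ~~ maximal p -> (#|up_covers p| <= 1)%N ->
  exists2 c, p < c & forall a, p < a -> c <= a.
Proof.
move=> /forallPn[q0]; rewrite negbK => pq0 covers1.
have cover_below a : p < a -> exists2 c, c \in up_covers p & c <= a.
  move=> pa; have [|c /andP[pc ca] c_min] := @exists_minimal_in _ _ (fun c => p < c <= a) a.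
    by rewrite pa lexx.
  exists c => //; rewrite inE /covers pc; apply/forallP => r; apply/negP => /andP[pr rc].
  by move: (c_min r); rewrite pr (le_trans (ltW rc) ca) rc => /(_ isT).
have [c c_cov _] := cover_below q0 pq0.
exists c => [|a /cover_below[c' c'_cov c'a]]; first by move: c_cov; rewrite inE => /andP[].
suff -> : c = c' by [].
apply/eqP; apply: contraTT covers1 => cc'; rewrite -ltnNge.
have : [set c; c'] \subset up_covers p by apply/subsetP => r; rewrite in_set2 => /orP[]/eqP->.
by move/subset_leq_card; rewrite cards2 cc'.
Qed.

End Chains.

Section ChainSets.
Variables (R : realType) (d : Order.disp_t) (T : finPOrderType d).
Variables (A : {set T}) (lam : T -> nat).
Local Open Scope ring_scope.
Implicit Types (X : {set T}) (e : T -> R).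

Definition chain_order_ineqs (U1 U2 : {set T}) e : Prop :=
 [/\ (forall p a, p \in U1 -> a \in A -> (p < a)%O -> e p <= (lam a)%:R),
     (forall q b, q \in U1 -> b \in A -> (b < q)%O -> (lam b)%:R <= e q),
     (forall p q, p \in U1 -> q \in U1 -> (p < q)%O -> e p <= e q),
     (forall p, p \in U2 -> 0 <= e p) &
     (forall a b X, a \in A :|: U1 -> b \in A :|: U1 -> X != set0 -> X \subset U2 ->
        is_chain X -> (forall r, r \in X -> (b < r < a)%O) ->
        \sum_(r in X) e r <= e a - e b)] /\
 (forall q X, q \in U1 -> X != set0 -> X \subset U2 -> is_chain X ->
    (forall r, r \in X -> (r < q)%O) -> \sum_(r in X) e r <= e q).

Lemma sorted_lt_cons_rcons (b a : T) ps : sorted <%O (b :: rcons ps a) =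
  [&& (b < a)%O, all (> b)%O ps, all (< a)%O ps & pairwise <%O ps].
Proof.
rewrite sorted_pairwise; last exact: lt_trans.
by rewrite pairwise_cons pairwise_rcons all_rcons; case: (b < a)%O; rewrite /= ?andbA.
Qed.

Lemma sorted_lt_rcons (q : T) ps : sorted <%O (rcons ps q) = all (< q)%O ps && pairwise <%O ps.
Proof. by rewrite sorted_pairwise ?pairwise_rcons //; exact: lt_trans. Qed.


Lemma pairwise_lt_uniq (ps : seq T) : pairwise <%O ps -> uniq ps.
Proof. by rewrite -sorted_pairwise ?lt_sorted_uniq_le => [/andP[]|]//; exact: lt_trans. Qed.

Lemma pairwise_lt_sort_chain X : is_chain X -> pairwise <%O (sort <=%O (fintype.enum X)).
Proof.
move=> X_chain; rewrite -sorted_pairwise; last exact: lt_trans.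
rewrite lt_sorted_uniq_le sort_uniq enum_uniq /=.
apply: (sort_sorted_in (P := mem X)); last by apply/allP => r; rewrite mem_enum.
move=> u v uX vX; case: (eqVneq u v) => [->|uv]; first by rewrite lexx.
by case/orP: (X_chain u v uX vX uv) => /ltW ->; rewrite ?orbT.
Qed.

Lemma sum_chains_le (B : pred T) (F : T -> R) (c : R) :
  (forall ps, ps != [::] -> all B ps -> pairwise <%O ps -> \sum_(r <- ps) F r <= c) <->
  (forall X, X != set0 -> {subset X <= B} -> is_chain X -> \sum_(r in X) F r <= c).
Proof.
split=> [hps X X0 XB X_chain | hX ps ps0 psB ps_lt].
  have memX r : (r \in sort <=%O (fintype.enum X)) = (r \in X) by rewrite mem_sort mem_enum.
  have perm_X : perm_eq (sort <=%O (fintype.enum X)) (fintype.enum X) by rewrite perm_sort.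
  rewrite -big_enum -(perm_big _ perm_X); apply: hps.
  - by apply: contraNneq X0 => X_nil; apply/eqP/setP => r; rewrite -memX X_nil inE.
  - by apply/allP => r; rewrite memX => /XB.
  - exact: pairwise_lt_sort_chain.
rewrite big_uniq ?pairwise_lt_uniq //.
have -> : \sum_(r in ps) F r = \sum_(r in [set r in ps]) F r.
  by apply: eq_bigl => r; rewrite inE.
apply: hX; last exact: is_chain_pairwise.
- by case: ps ps0 {psB ps_lt} => // r ps _; apply/set0Pn; exists r; rewrite inE mem_head.
- by move=> r; rewrite inE => /(allP psB).
Qed.

Lemma sum_chains_between_le (U : {set T}) (b a : T) (F : T -> R) (c : R) :
  (forall ps, ps != [::] -> all (fun p => p \in U) ps -> sorted <%O (b :: rcons ps a) ->
     \sum_(r <- ps) F r <= c) <->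
  (forall X, X != set0 -> X \subset U -> is_chain X -> (forall r, r \in X -> (b < r < a)%O) ->
     \sum_(r in X) F r <= c).
Proof.
set B := [pred r | (r \in U) && (b < r < a)%O].
have [to_sets to_lists] := sum_chains_le B F c.
split=> [hps X X0 XU X_chain Xba | hX ps ps0 psU].
  have XB : {subset X <= B} by move=> r rX; rewrite inE (subsetP XU) ?Xba.
  apply: (to_sets _ X X0 XB X_chain) => ps ps0 /allP psB ps_lt.
  apply: hps => //; first by apply/allP => r /psB/andP[].
  rewrite sorted_lt_cons_rcons ps_lt andbT; apply/and3P; split.
  - by case: ps ps0 psB {ps_lt} => // r ps _ /(_ r (mem_head _ _))/and3P[_ /lt_trans]; apply.
  - by apply/allP => r /psB/and3P[].
  - by apply/allP => r /psB/and3P[].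
rewrite sorted_lt_cons_rcons => /and4P[_ ps_b ps_a ps_lt].
apply: (to_lists _ ps ps0 _ ps_lt) => [X X0 XB X_chain|].
  have XU : X \subset U by apply/subsetP => r /XB/andP[].
  by apply: (hX X X0 XU X_chain) => r /XB/and3P[_ -> ->].
apply/allP => r rps; rewrite inE; apply/and3P.
by split; [exact: (allP psU) | exact: (allP ps_b) | exact: (allP ps_a)].
Qed.

Lemma sum_chains_below_le (U : {set T}) (q : T) (F : T -> R) (c : R) :
  (forall ps, ps != [::] -> all (fun p => p \in U) ps -> sorted <%O (rcons ps q) ->
     \sum_(r <- ps) F r <= c) <->
  (forall X, X != set0 -> X \subset U -> is_chain X -> (forall r, r \in X -> (r < q)%O) ->
     \sum_(r in X) F r <= c).
Proof.
set B := [pred r | (r \in U) && (r < q)%O].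
have [to_sets to_lists] := sum_chains_le B F c.
split=> [hps X X0 XU X_chain Xq | hX ps ps0 psU].
  have XB : {subset X <= B} by move=> r rX; rewrite inE (subsetP XU) ?Xq.
  apply: (to_sets _ X X0 XB X_chain) => ps ps0 /allP psB ps_lt.
  apply: hps => //; first by apply/allP => r /psB/andP[].
  by rewrite sorted_lt_rcons ps_lt andbT; apply/allP => r /psB/andP[].
rewrite sorted_lt_rcons => /andP[ps_q ps_lt].
apply: (to_lists _ ps ps0 _ ps_lt) => [X X0 XB X_chain|].
  have XU : X \subset U by apply/subsetP => r /XB/andP[].
  by apply: (hX X X0 XU X_chain) => r /XB/andP[].
apply/allP => r rps; rewrite inE; apply/andP.
by split; [exact: (allP psU) | exact: (allP ps_q)].
Qed.

Lemma chain_order_polytopeE (U1 U2 : {set T}) (x : Defs.coord A -> R) :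
  chain_order_polytope lam U1 U2 x <-> chain_order_ineqs U1 U2 (ext lam x).
Proof.
split=> -[[h1 h2 h3 h4 h5] h6]; (split; [split|]) => //.
- move=> a b X aA bA; move: X; apply/sum_chains_between_le => ps; exact: h5.
- move=> q X qU; move: X; apply/sum_chains_below_le => ps; exact: h6.
- move=> a b ps aA bA; move: ps; apply/sum_chains_between_le => X; exact: h5.
- move=> q ps qU; move: ps; apply/sum_chains_below_le => X; exact: h6.
Qed.

Lemma chain_order_ineqs_subset (U1 U2 V1 V2 : {set T}) e :
  U1 \subset V1 -> U2 \subset V2 -> chain_order_ineqs V1 V2 e -> chain_order_ineqs U1 U2 e.
Proof.
move=> /subsetP UV1 /subsetP UV2 [[h1 h2 h3 h4 h5] h6].
have A_UV1 r : r \in A :|: U1 -> r \in A :|: V1.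
  by rewrite !inE => /orP[->|/UV1->]; rewrite ?orbT.
have XUV X : X \subset U2 -> X \subset V2 by move=> /subset_trans; apply; apply/subsetP.
split; [split|].
- by move=> q a /UV1; apply: h1.
- by move=> q b /UV1; apply: h2.
- by move=> q q' /UV1 qV /UV1; apply: h3.
- by move=> q /UV2; apply: h4.
- by move=> a b X /A_UV1 aV /A_UV1 bV X0 /XUV; apply: h5.
- by move=> q X /UV1 qV X0 /XUV; apply: h6.
Qed.

Lemma chain_order_ineqs_eq_in (U1 U2 : {set T}) e e' :
  {in A :|: U1 :|: U2, e =1 e'} -> chain_order_ineqs U1 U2 e -> chain_order_ineqs U1 U2 e'.
Proof.
move=> ee' [[h1 h2 h3 h4 h5] h6].
have eU1 r : r \in U1 -> e' r = e r by move=> rU; rewrite ee' // !inE rU orbT.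
have eA1 r : r \in A :|: U1 -> e' r = e r by move=> rA; rewrite ee' // inE rA.
have eX X : X \subset U2 -> \sum_(r in X) e' r = \sum_(r in X) e r.
  by move=> XU; apply: eq_bigr => r /(subsetP XU) rU; rewrite ee' // inE rU orbT.
split; [split|].
- by move=> q a qU *; rewrite eU1 //; apply: h1.
- by move=> q b qU *; rewrite eU1 //; apply: h2.
- by move=> q q' qU q'U *; rewrite !eU1 //; apply: h3.
- by move=> q qU; rewrite -ee' ?inE ?qU ?orbT //; apply: h4.
- by move=> a b X aA bA X0 XU *; rewrite eX // !eA1 //; apply: h5.
- by move=> q X qU X0 XU *; rewrite eX // eU1 //; apply: h6.
Qed.

End ChainSets.

Section Coordinates.
Variables (R : realType) (d : Order.disp_t) (T : finPOrderType d).
Variables (A : {set T}) (lam : T -> nat).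
Local Open Scope ring_scope.
Implicit Type x : Defs.coord A -> R.

Lemma ext_val x (i : Defs.coord A) : ext lam x (val i) = x i.
Proof. by rewrite /ext valK. Qed.

Lemma ext_marked x q : q \in A -> ext lam x q = (lam q)%:R.
Proof. by move=> qA; rewrite /ext insubF // qA. Qed.

Lemma sum_ext_unmarked x (Y : {set T}) : [disjoint Y & A] ->
  \sum_(r in Y) ext lam x r = \sum_(j : Defs.coord A) ((val j \in Y)%:Z)%:~R * x j.
Proof.
move=> YA; have -> : \sum_(r in Y) ext lam x r =
                     \sum_(r | r \notin A) ((r \in Y)%:Z)%:~R * ext lam x r.
  rewrite big_mkcond [RHS]big_mkcond; apply: eq_bigr => r _.
  case: (boolP (r \in Y)) => rY; last by case: (r \notin A); rewrite ?mul0r.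
  by rewrite (disjointFr YA rY) mul1r.
rewrite (reindex_omap (val : Defs.coord A -> T) insub) => [|r rA]; last by rewrite insubT.
apply: eq_big => [j|j _]; first by rewrite valK eqxx andbT; case: j.
by rewrite ext_val.
Qed.

End Coordinates.

Section MarkedElements.
Variables (d : Order.disp_t) (T : finPOrderType d) (A : {set T}).
Hypothesis A_marked : marked_poset A.
Local Open Scope order_scope.

Lemma exists_marked_lt q : q \notin A -> exists2 m, m \in A & m < q.
Proof.
move=> qA; have [m m_min mq] := exists_minimal_le q.
have mA : m \in A by apply: A_marked; rewrite m_min.
by exists m; rewrite // lt_neqAle mq andbT; apply: contraNneq qA => <-.
Qed.

Lemma exists_marked_below_chain (X : {set T}) : X != set0 -> [disjoint X & A] ->
  is_chain X -> exists2 m, m \in A & forall r, r \in X -> m < r.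
Proof.
case/set0Pn=> r1 r1X XA X_chain.
have [r0 r0X r0_min] := @exists_minimal_in _ _ (mem X) r1 r1X.
have [m mA mr0] := exists_marked_lt (negbT (disjointFr XA r0X)).
exists m => // r rX; case: (eqVneq r r0) => [->//|rr0].
case/orP: (X_chain r r0 rX r0X rr0) => [rr0'|]; last exact: lt_trans.
by move: (r0_min r rX); rewrite rr0'.
Qed.

End MarkedElements.

Lemma ler_sum_subset (R : numDomainType) (I : finType) (X Y : {set I}) (f : I -> R) :
  X \subset Y -> (forall i, i \in Y -> 0 <= f i)%R ->
  (\sum_(i in X) f i <= \sum_(i in Y) f i)%R.
Proof.
move=> XY f_ge0; rewrite [leRHS](big_setID X) /= (setIidPr XY) lerDl.
by apply: sumr_ge0 => i /setDP[/f_ge0].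
Qed.

Section Flip.
Variables (R : realType) (d : Order.disp_t) (T : finPOrderType d).
Variables (A : {set T}) (lam : T -> nat) (W1 W2 : {set T}) (p : T).
Hypotheses (A_marked : marked_poset A) (W_dec : decomposition A W1 W2)
  (W_adm : admissible W1 W2) (pW1 : p \in W1)
  (p_min : forall q, (q < p)%O -> q \notin W1).
Local Open Scope ring_scope.
Notation ineqs := (@chain_order_ineqs R d T A lam).
Notation W1' := (W1 :\ p).
Notation W2' := (p |: W2).
Implicit Types (e : T -> R) (X : {set T}).

Lemma unmarkedE q : (q \notin A) = (q \in W1) || (q \in W2).
Proof. by case: W_dec => _ W12; rewrite -in_setU W12 inE. Qed.

Lemma p_unmarked : p \notin A.
Proof. by rewrite unmarkedE pW1. Qed.

Lemma p_notin_W2 : p \notin W2.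
Proof. by case: W_dec => /disjointFr/(_ pW1) ->. Qed.

Lemma W2'_unmarked X : X \subset W2' -> [disjoint X & A].
Proof.
move=> /subsetP XW; rewrite disjoints_subset; apply/subsetP => r /XW.
by rewrite !inE => /orP[/eqP->|rW]; rewrite ?p_unmarked // unmarkedE rW orbT.
Qed.

Lemma mem_A1_W1' q : q != p -> (q \in A :|: W1') = (q \in A :|: W1).
Proof. by rewrite !inE => ->. Qed.

Lemma above_p a : (p < a)%O -> a \in A :|: W1'.
Proof.
move=> pa; have ap : a != p by rewrite gt_eqF.
rewrite mem_A1_W1' // in_setU; case: (boolP (a \in A)) => //= aA.
case: W_dec => _ /setP/(_ a); rewrite !inE aA => /orP[//|aW] /=.
by case: (W_adm pW1 aW).
Qed.

Lemma below_p b : b \in A :|: W1 -> (b < p)%O -> b \in A.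
Proof. by rewrite inE => /orP[//|bW] /p_min; rewrite bW. Qed.

Definition lower_chain b X : Prop :=
  [/\ b \in A, (b < p)%O, X \subset W2, is_chain X & forall r, r \in X -> (b < r < p)%O].

Definition order_bounds_at_p e : Prop :=
  (forall a, (p < a)%O -> e p <= e a) /\
  (forall b X, lower_chain b X -> e b + \sum_(r in X) e r <= e p).

Definition chain_bounds_at_p e : Prop :=
  0 <= e p /\
  (forall a b X, (p < a)%O -> lower_chain b X -> e b + \sum_(r in X) e r + e p <= e a).

Lemma lower_chain_set0 b : b \in A -> (b < p)%O -> lower_chain b set0.
Proof. by move=> bA bp; split=> //; [exact: sub0set | move=> u v | move=> r]; rewrite inE. Qed.

Lemma subset_W2_of_W2' X : p \notin X -> X \subset W2' -> X \subset W2.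
Proof.
move=> pX /subsetP XW; apply/subsetP => r rX; have := XW r rX.
by rewrite !inE; case: eqVneq rX => // ->; rewrite (negbTE pX).
Qed.

Lemma chain_through_p X : p \in X -> X \subset W2' -> is_chain X ->
  X :\ p \subset W2 /\ forall r, r \in X :\ p -> (r < p)%O.
Proof.
move=> pX /subsetP XW X_chain; split=> [|r].
  by apply/subsetP => r /setD1P[rp /XW]; rewrite !inE (negbTE rp).
case/setD1P=> rp rX; case/orP: (X_chain r p rX pX rp) => // pr.
by move: (XW r rX); rewrite !inE (negbTE rp) => /(W_adm pW1)/(_ pr).
Qed.

Section MarkedValues.
Variable e : T -> R.
Hypothesis eA : forall a, a \in A -> e a = (lam a)%:R.

Lemma order_bounds_of_ineqs : ineqs W1 W2 e -> order_bounds_at_p e.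
Proof.
case=> [[h1 h2 h3 h4 h5] h6]; split.
  move=> a pa; case/setUP: (above_p pa) => [aA|/setD1P[_ aW]]; last exact: h3.
  by rewrite (eA aA); apply: h1.
move=> b X [bA bp XW X_chain Xbp]; case: (eqVneq X set0) => [->|X0].
  by rewrite big_set0 addr0 (eA bA); apply: h2.
by rewrite addrC -lerBrDr; apply: h5; rewrite // inE ?bA ?pW1 ?orbT.
Qed.

Lemma ineqs_of_order_bounds : ineqs W1' W2 e -> order_bounds_at_p e -> ineqs W1 W2 e.
Proof.
case=> [[h1 h2 h3 h4 h5] h6] [up low]; split; [split|] => //.
- move=> q a qW aA qa; case: (eqVneq q p) => [qp|qp]; last by apply: h1; rewrite // !inE qp.
  by subst q; rewrite -(eA aA); apply: up.
- move=> q b qW bA bq; case: (eqVneq q p) => [qp|qp]; last by apply: h2; rewrite // !inE qp.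
  by subst q; have := low b set0 (lower_chain_set0 bA bq); rewrite big_set0 addr0 eA.
- move=> q q' qW q'W qq'; case: (eqVneq q p) => [qp|qp]; first by subst q; apply: up.
  case: (eqVneq q' p) => [q'p|q'p]; first by subst q'; move: (p_min qq'); rewrite qW.
  by apply: h3; rewrite // !inE ?qp ?q'p.
- move=> a b X aA1 bA1 X0 XW X_chain Xba.
  have [a_p|ap] := eqVneq a p.
    subst a; have bp : (b < p)%O by case/set0Pn: X0 => r /Xba/andP[/lt_trans]; apply.
    by rewrite lerBrDr addrC; apply: low; split; rewrite ?(below_p bA1) // => r /Xba.
  have [b_p|bp] := eqVneq b p.
    subst b; case/set0Pn: X0 => r rX; case/andP: (Xba r rX) => pr _.
    by case: (W_adm pW1 (subsetP XW r rX) pr).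
  by apply: h5; rewrite ?mem_A1_W1'.
- move=> q X qW X0 XW X_chain Xq; case: (eqVneq q p) => [qp|qp]; last first.
    by apply: h6; rewrite // !inE qp.
  subst q; have XA : [disjoint X & A].
    by apply: W2'_unmarked; apply: subset_trans XW (subsetUr _ _).
  have [m mA m_lt] := exists_marked_below_chain A_marked X0 XA X_chain.
  have mp : (m < p)%O by case/set0Pn: X0 => r rX; apply: lt_trans (m_lt r rX) (Xq r rX).
  have low_m : lower_chain m X by split => // r rX; rewrite m_lt ?Xq.
  by have := low m X low_m; rewrite (eA mA); have := ler0n R (lam m); lra.
Qed.

Lemma ineqs_order_coordE : ineqs W1 W2 e <-> ineqs W1' W2 e /\ order_bounds_at_p e.
Proof.
split=> [old|[rest bounds]]; last exact: ineqs_of_order_bounds.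
split; last exact: order_bounds_of_ineqs.
exact: chain_order_ineqs_subset (subD1set _ _) (subxx _) old.
Qed.

Lemma chain_bounds_of_ineqs : ineqs W1' W2' e -> chain_bounds_at_p e.
Proof.
case=> [[_ _ _ h4 h5] _]; split; first by apply: h4; rewrite setU11.
move=> a b X pa [bA bp XW X_chain Xbp].
have pX : p \notin X by apply: contraNN p_notin_W2 => /(subsetP XW).
have X'0 : p |: X != set0 by apply/set0Pn; exists p; rewrite setU11.
have X'_chain : is_chain (p |: X) by apply: is_chain_setU1 => // r /Xbp/andP[_ ->].
have X'_bnd r : r \in p |: X -> (b < r < a)%O.
  by case/setU1P=> [->|/Xbp/andP[-> /lt_trans]]; [rewrite bp pa | apply].
have bA1 : b \in A :|: W1' by rewrite inE bA.
have := h5 a b _ (above_p pa) bA1 X'0 (setUS _ XW) X'_chain X'_bnd.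
by rewrite big_setU1 //=; lra.
Qed.

Lemma ineqs_of_chain_bounds : ineqs W1' W2 e -> chain_bounds_at_p e -> ineqs W1' W2' e.
Proof.
case=> [[h1 h2 h3 h4 h5] h6] [p_ge0 bnd]; split; [split|] => //.
- by move=> q /setU1P[->|/h4].
- move=> a b X aA1 bA1 X0 XW' X_chain Xba; have [pX|pX] := boolP (p \in X); last first.
    by apply: h5; rewrite // subset_W2_of_W2'.
  have [XW Xp] := chain_through_p pX XW' X_chain.
  have /andP[bp pa] := Xba p pX.
  have bA : b \in A by apply: (below_p _ bp); rewrite -mem_A1_W1' // lt_eqF.
  have low : lower_chain b (X :\ p).
    split=> // [|r rX]; first exact: is_chain_subset (subD1set X p) X_chain.
    by rewrite Xp // andbT; case/setD1P: rX => _ /Xba/andP[].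
  by have := bnd a b _ pa low; rewrite (big_setD1 p pX) /=; lra.
- move=> q X qW X0 XW' X_chain Xq; have [pX|pX] := boolP (p \in X); last first.
    by apply: h6; rewrite // subset_W2_of_W2'.
  have [XW Xp] := chain_through_p pX XW' X_chain.
  have [m mA m_lt] := exists_marked_below_chain A_marked X0 (W2'_unmarked XW') X_chain.
  have low : lower_chain m (X :\ p).
    split=> //; [exact: m_lt | exact: is_chain_subset (subD1set X p) X_chain |].
    by move=> r rX; rewrite Xp // andbT m_lt //; case/setD1P: rX.
  have := bnd q m _ (Xq p pX) low; rewrite (big_setD1 p pX) (eA mA) /=.
  by have := ler0n R (lam m); lra.
Qed.

Lemma ineqs_chain_coordE : ineqs W1' W2' e <-> ineqs W1' W2 e /\ chain_bounds_at_p e.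
Proof.
split=> [new|[rest bounds]]; last exact: ineqs_of_chain_bounds.
split; last exact: chain_bounds_of_ineqs.
exact: chain_order_ineqs_subset (subxx _) (subsetUr _ _) new.
Qed.

End MarkedValues.

Section AgreeOffP.
Variables e e' : T -> R.
Hypothesis ee' : forall q, q != p -> e' q = e q.

Lemma lower_chain_agree b X :
  lower_chain b X -> e' b + \sum_(r in X) e' r = e b + \sum_(r in X) e r.
Proof.
case=> _ bp _ _ Xbp; rewrite ee' ?lt_eqF //; congr (_ + _).
by apply: eq_bigr => r /Xbp/andP[_ rp]; rewrite ee' ?lt_eqF.
Qed.

Lemma flip_ineqsE : (forall a, a \in A -> e a = (lam a)%:R) ->
  (ineqs W1' W2 e -> (order_bounds_at_p e <-> chain_bounds_at_p e')) ->
  (ineqs W1 W2 e <-> ineqs W1' W2' e').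
Proof.
move=> eA bounds_iff.
have e'A a : a \in A -> e' a = (lam a)%:R.
  by move=> aA; rewrite ee' ?eA //; apply: contraNneq p_unmarked => <-.
have rest : ineqs W1' W2 e <-> ineqs W1' W2 e'.
  have ee'_in : {in A :|: W1' :|: W2, e =1 e'}.
    move=> q; rewrite !inE => qW; rewrite ee' //; apply: contraTneq qW => ->.
    by rewrite eqxx (negbTE p_unmarked) (negbTE p_notin_W2).
  by split; apply: chain_order_ineqs_eq_in => // q /ee'_in.
rewrite (ineqs_order_coordE eA) (ineqs_chain_coordE e'A) -rest.
by split=> -[r b]; split=> //; apply/(bounds_iff r).
Qed.

Lemma order_chain_bounds_least_upper u :
  (p < u)%O -> (forall a, (p < a)%O -> e u <= e a) -> e' p = e u - e p ->
  order_bounds_at_p e <-> chain_bounds_at_p e'.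
Proof.
move=> pu u_least e'p.
have e'a a : (p < a)%O -> e' a = e a by move=> pa; rewrite ee' ?gt_eqF.
split=> [[up low]|[p_ge0 bnd]].
  split=> [|a b X pa low_bX]; first by rewrite e'p subr_ge0 up.
  rewrite lower_chain_agree // e'p e'a //.
  by have := low b X low_bX; have := u_least a pa; lra.
split=> [a pa|b X low_bX].
  by have := u_least a pa; move: p_ge0; rewrite e'p; lra.
by have := bnd u b X pu low_bX; rewrite lower_chain_agree // e'p e'a //; lra.
Qed.

Lemma order_chain_bounds_greatest_lower b0 X0 :
  lower_chain b0 X0 ->
  (forall b X, lower_chain b X -> e b + \sum_(r in X) e r <= e b0 + \sum_(r in X0) e r) ->
  e' p = e p - (e b0 + \sum_(r in X0) e r) ->
  order_bounds_at_p e <-> chain_bounds_at_p e'.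
Proof.
move=> low0 greatest e'p.
have e'a a : (p < a)%O -> e' a = e a by move=> pa; rewrite ee' ?gt_eqF.
split=> [[up low]|[p_ge0 bnd]].
  split=> [|a b X pa low_bX]; first by rewrite e'p subr_ge0 low.
  rewrite lower_chain_agree // e'p e'a //.
  by have := greatest b X low_bX; have := up a pa; lra.
split=> [a pa|b X low_bX].
  by have := bnd a b0 X0 pa low0; rewrite lower_chain_agree // e'p e'a //; lra.
by have := greatest b X low_bX; move: p_ge0; rewrite e'p; lra.
Qed.

End AgreeOffP.

Definition no_W2_between b a : bool := [forall r in W2, ~~ (b < r < a)%O].

Section LeastUpper.
Variable e : T -> R.
Hypotheses (eA : forall a, a \in A -> e a = (lam a)%:R) (rest : ineqs W1' W2 e).

Lemma least_upper_unmarked_cover c : c \in W1 -> (p < c)%O ->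
  (forall a, (p < a)%O -> (c <= a)%O) -> forall a, (p < a)%O -> e c <= e a.
Proof.
case: rest => [[h1 _ h3 _ _] _] cW pc c_least a pa; have [<-//|ca] := eqVneq c a.
have {}ca : (c < a)%O by rewrite lt_neqAle ca c_least.
have cW' : c \in W1' by rewrite !inE gt_eqF.
by case/setUP: (above_p pa) => [aA|aW]; [rewrite (eA aA); apply: h1 | apply: h3].
Qed.

Lemma least_upper_marked_cover c a0 : c \in A -> (forall a, (p < a)%O -> (c <= a)%O) ->
  a0 \in A -> (c <= a0)%O -> (forall a, a \in A -> (c <= a)%O -> (lam a0 <= lam a)%N) ->
  forall a, (p < a)%O -> e a0 <= e a.
Proof.
case: rest => [[_ h2 _ _ _] _] cA c_least a0A ca0 a0_min a pa; rewrite (eA a0A).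
case/setUP: (above_p pa) => [aA|aW]; first by rewrite (eA aA) ler_nat a0_min ?c_least.
have ca : (c < a)%O.
  rewrite lt_neqAle c_least // andbT; apply: contraTneq cA => ->.
  by case/setD1P: aW => _ aW; rewrite unmarkedE aW.
by apply: le_trans (h2 a c aW cA ca); rewrite ler_nat a0_min.
Qed.

End LeastUpper.

Section GreatestLower.
Hypothesis below_total : forall u v, (u < p)%O -> (v < p)%O -> (u <= v)%O || (v <= u)%O.
Variables (b0 b1 : T).
Hypotheses (b0A : b0 \in A) (b0p : (b0 < p)%O)
  (b0_max : forall b, b \in A -> (b < p)%O -> ~~ (b0 < b)%O).
Hypotheses (b1A : b1 \in A) (b1p : (b1 < p)%O)
  (b1_max : forall b, b \in A -> (b < p)%O -> no_W2_between b b0 -> (lam b <= lam b1)%N).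
Local Notation Cs := [set r | (b0 < r < p)%O].

Lemma le_b0 b : b \in A -> (b < p)%O -> (b <= b0)%O.
Proof.
move=> bA bp; case/orP: (below_total bp b0p) => // b0b.
by move: (b0_max bA bp); rewrite lt_neqAle b0b andbT negbK => /eqP->.
Qed.

Lemma between_b0_p_W2 : Cs \subset W2.
Proof.
apply/subsetP => r; rewrite inE => /andP[b0r rp].
have rA : r \notin A by apply/negP => rA; move: (b0_max rA rp); rewrite b0r.
by move: rA; rewrite unmarkedE (negbTE (p_min rp)).
Qed.

Lemma lower_chain_b1 : lower_chain b1 Cs.
Proof.
split=> //; first exact: between_b0_p_W2.
  move=> u v; rewrite !inE => /andP[_ up] /andP[_ vp] uv.
  case/orP: (below_total up vp) => [uv'|vu]; first by rewrite lt_neqAle uv uv'.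
  by rewrite (lt_neqAle v) eq_sym uv vu orbT.
move=> r; rewrite inE => /andP[b0r ->]; rewrite andbT.
exact: le_lt_trans (le_b0 b1A b1p) b0r.
Qed.

Section Bound.
Variable e : T -> R.
Hypotheses (eA : forall a, a \in A -> e a = (lam a)%:R) (rest : ineqs W1' W2 e).

Lemma lower_chain_below_b0_le b X : b \in A -> (b < p)%O -> X \subset W2 -> is_chain X ->
  (forall r, r \in X -> (b < r < b0)%O) -> e b + \sum_(r in X) e r <= (lam b1)%:R.
Proof.
case: rest => [[_ _ _ h4 h5] _] bA bp XW X_chain Xb.
have b0_b1 : (lam b0)%:R <= (lam b1)%:R :> R.
  by rewrite ler_nat b1_max //; apply/forall_inP => r _; rewrite lt_asym.
have A1 a : a \in A -> a \in A :|: W1' by rewrite inE => ->.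
have [->|X0] := eqVneq X set0; last first.
  by have := h5 b0 b X (A1 _ b0A) (A1 _ bA) X0 XW X_chain Xb; rewrite (eA b0A); lra.
rewrite big_set0 addr0 (eA bA).
have [b_free|/forall_inPn[r rW /negPn brb0]] := boolP (no_W2_between b b0).
  by rewrite ler_nat b1_max.
have r0 : [set r] != set0 by apply/set0Pn; exists r; rewrite inE.
have r_chain : is_chain [set r] by move=> u v /set1P-> /set1P->; rewrite eqxx.
have r_W : [set r] \subset W2 by rewrite sub1set.
have r_bnd u : u \in [set r] -> (b < u < b0)%O by move=> /set1P->.
have := h5 b0 b _ (A1 _ b0A) (A1 _ bA) r0 r_W r_chain r_bnd.
by rewrite big_set1 (eA b0A) (eA bA); have := h4 r rW; lra.
Qed.

Lemma lower_chain_le_b1 b X :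
  lower_chain b X -> e b + \sum_(r in X) e r <= e b1 + \sum_(r in Cs) e r.
Proof.
case: rest => [[_ _ _ h4 _] _] [bA bp XW X_chain Xbp].
have r_b0 r : r \in X -> r != b0.
  by move=> /(subsetP XW) rW; apply: contraTneq b0A => <-; rewrite unmarkedE rW orbT.
rewrite (big_setID [set r | (r < b0)%O]) /= addrA (eA b1A); apply: lerD.
  apply: lower_chain_below_b0_le => //.
  - exact: subset_trans (subsetIl _ _) XW.
  - exact: is_chain_subset (subsetIl _ _) X_chain.
  - by move=> r /setIP[/Xbp/andP[-> _]]; rewrite inE.
apply: ler_sum_subset => [|r /(subsetP between_b0_p_W2)/h4 //].
apply/subsetP => r /setDP[rX]; rewrite !inE => nrb0; have /andP[_ rp] := Xbp r rX.
rewrite rp andbT; case/orP: (below_total rp b0p) => [rb0|b0r].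
  by move: nrb0; rewrite lt_neqAle rb0 r_b0.
by rewrite lt_neqAle b0r eq_sym r_b0.
Qed.

End Bound.

End GreatestLower.

Lemma unimodular_equiv_flip_of_shear (s sg beta : int) (Y : {set T}) :
  s * s = 1 -> [disjoint Y & A] -> p \notin Y ->
  (forall e e', (forall a, a \in A -> e a = (lam a)%:R) -> (forall q, q != p -> e' q = e q) ->
     e' p = s%:~R * e p + sg%:~R * \sum_(r in Y) e r + beta%:~R ->
     ineqs W1' W2 e -> (order_bounds_at_p e <-> chain_bounds_at_p e')) ->
  unimodular_equiv (chain_order_polytope (R := R) (A := A) lam W1 W2)
                   (chain_order_polytope lam W1' W2').
Proof.
move=> s2 YA pY bounds_iff; pose p0 : Defs.coord A := exist _ p p_unmarked.
pose w (j : Defs.coord A) := sg * (val j \in Y)%:Z.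
have w_p0 : w p0 = 0 by rewrite /w /= (negbTE pY) mulr0.
apply: (unimodular_equiv_shear (p0 := p0) (beta := beta) s2 w_p0) => x.
set y := fun i => _; rewrite !chain_order_polytopeE.
have yx q : q != p -> ext lam y q = ext lam x q.
  move=> qp; have [qA|qA] := boolP (q \in A); first by rewrite !ext_marked.
  have -> : q = val (exist _ q qA : Defs.coord A) by [].
  by rewrite !ext_val /y -(inj_eq val_inj) /= (negbTE qp).
apply: (flip_ineqsE yx) => [a aA|rest]; first by rewrite ext_marked.
apply: bounds_iff rest => // [a aA|]; first by rewrite ext_marked.
rewrite -[p]/(val p0) !ext_val /y eqxx (sum_ext_unmarked _ _ YA) mulr_sumr.
by congr (_ + _ + _); apply: eq_bigr => j _; rewrite /w intrM mulrA.
Qed.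

Section SingleCover.
Variable c : T.
Hypotheses (pc : (p < c)%O) (c_least : forall a, (p < a)%O -> (c <= a)%O).

Lemma unimodular_equiv_flip_unmarked_cover : c \notin A ->
  unimodular_equiv (chain_order_polytope (R := R) (A := A) lam W1 W2)
                   (chain_order_polytope lam W1' W2').
Proof.
move=> cA; have cW : c \in W1.
  by move: cA; rewrite unmarkedE => /orP[//|cW]; case: (W_adm pW1 cW pc).
apply: (@unimodular_equiv_flip_of_shear (-1) 1 0 [set c]) => //.
- by rewrite disjoints_subset sub1set inE.
- by rewrite inE lt_eqF.
move=> e e' eA ee' e'p rest.
have c_least_above := least_upper_unmarked_cover eA rest cW pc c_least.
apply: (order_chain_bounds_least_upper ee' pc c_least_above).
by rewrite e'p big_set1 mulrN1z mulr1z mulN1r mul1r addr0 addrC.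
Qed.

Lemma unimodular_equiv_flip_marked_cover : c \in A ->
  unimodular_equiv (chain_order_polytope (R := R) (A := A) lam W1 W2)
                   (chain_order_polytope lam W1' W2').
Proof.
move=> cA; have cc : (c \in A) && (c <= c)%O by rewrite cA lexx.
have [a0 /andP[a0A ca0] a0_min] := @arg_minnP _ c (fun a => (a \in A) && (c <= a)%O) lam cc.
apply: (@unimodular_equiv_flip_of_shear (-1) 0 (lam a0)%:Z set0) => //.
- by rewrite disjoints_subset sub0set.
- by rewrite inE.
move=> e e' eA ee' e'p rest.
have a0_least a : a \in A -> (c <= a)%O -> (lam a0 <= lam a)%N.
  by move=> aA ca; apply: a0_min; rewrite aA.
have a0_least_above := least_upper_marked_cover eA rest cA c_least a0A ca0 a0_least.
apply: (order_chain_bounds_least_upper ee' (lt_le_trans pc ca0) a0_least_above).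
by rewrite e'p mulrN1z mul0r addr0 mulN1r (eA _ a0A) addrC.
Qed.

End SingleCover.

Section LowerChain.
Hypotheses (p_not_star : ~ star_elem p) (two_covers : (2 <= #|up_covers p|)%N).

Lemma unimodular_equiv_flip_lower_chain :
  unimodular_equiv (chain_order_polytope (R := R) (A := A) lam W1 W2)
                   (chain_order_polytope lam W1' W2').
Proof.
have below_total := non_star_lt_total p_not_star two_covers.
have [m mA mp] := exists_marked_lt A_marked p_unmarked.
have [|b0 /andP[b0A b0p] b0_max] := @exists_maximal_in _ _ (fun b => (b \in A) && (b < p)%O) m.
  by rewrite mA mp.
(* [lam] need not increase along the marked elements below [b0], so the shift uses the
   largest marking from which [b0] is reached without passing through [W2]. *)
have b0_cand : [&& b0 \in A, (b0 < p)%O & no_W2_between b0 b0].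
  by rewrite b0A b0p; apply/forall_inP => r _; rewrite lt_asym.
have b0_max' b : b \in A -> (b < p)%O -> ~~ (b0 < b)%O.
  by move=> bA bp; apply: b0_max; rewrite bA.
have [b1 /and3P[b1A b1p _] b1_max] :=
  @arg_maxnP _ b0 (fun b => [&& b \in A, (b < p)%O & no_W2_between b b0]) lam b0_cand.
have b1_max' b : b \in A -> (b < p)%O -> no_W2_between b b0 -> (lam b <= lam b1)%N.
  by move=> bA bp b_free; apply: b1_max; rewrite bA bp.
have Cs_W2 := between_b0_p_W2 b0_max'.
apply: (@unimodular_equiv_flip_of_shear 1 (-1) (- (lam b1)%:Z) _) => //.
- exact: W2'_unmarked (subset_trans Cs_W2 (subsetUr _ _)).
- by rewrite inE ltxx andbF.
move=> e e' eA ee' e'p rest.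
have b1_greatest := lower_chain_le_b1 below_total b0A b0p b0_max' b1A b1_max' eA rest.
have b1_lower := lower_chain_b1 below_total b0p b0_max' b1A b1p.
apply: (order_chain_bounds_greatest_lower ee' b1_lower b1_greatest).
by rewrite e'p mul1r mulN1r rmorphN /= (eA _ b1A); lra.
Qed.

End LowerChain.

Lemma unimodular_equiv_flip : ~ star_elem p ->
  unimodular_equiv (chain_order_polytope (R := R) (A := A) lam W1 W2)
                   (chain_order_polytope lam W1' W2').
Proof.
move=> p_not_star; have [two_covers|one_cover] := leqP 2 #|up_covers p|.
  exact: unimodular_equiv_flip_lower_chain.
have p_not_max : ~~ maximal p.
  by apply: contra p_unmarked => p_max; apply: A_marked; rewrite p_max orbT.
have [c pc c_least] := least_upper_of_single_cover p_not_max (ltnSE one_cover).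
have [cA|cA] := boolP (c \in A).
  exact: unimodular_equiv_flip_marked_cover pc c_least cA.
exact: unimodular_equiv_flip_unmarked_cover pc c_least cA.
Qed.

End Flip.

Section Decompositions.
Variables (R : realType) (d : Order.disp_t) (T : finPOrderType d).
Variables (A : {set T}) (lam : T -> nat).
Hypothesis A_marked : marked_poset A.
Local Notation Q W := (chain_order_polytope (R := R) (A := A) lam W (~: A :\: W)).

Lemma decompositionE (U1 U2 : {set T}) :
  decomposition A U1 U2 -> U1 \subset ~: A /\ U2 = ~: A :\: U1.
Proof.
case=> U12 <-; split; first exact: subsetUl.
apply/setP => r; rewrite !inE; case: (boolP (r \in U1)) => rU //=.
by rewrite (disjointFr U12 rU).
Qed.

Lemma unimodular_equiv_remove (W : {set T}) p : W \subset ~: A ->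
  admissible W (~: A :\: W) -> p \in W -> (forall q, (q < p)%O -> q \notin W) ->
  ~ star_elem p -> unimodular_equiv (Q W) (Q (W :\ p)).
Proof.
move=> WA W_adm pW p_min p_not_star.
have W_dec : decomposition A W (~: A :\: W).
  split; first by rewrite disjoints_subset; apply/subsetP => r rW; rewrite !inE rW.
  by apply/setP => r; rewrite !inE; case: (boolP (r \in W)) => //= /(subsetP WA); rewrite inE.
have -> : ~: A :\: (W :\ p) = p |: (~: A :\: W).
  apply/setP => r; rewrite !inE; case: (eqVneq r p) => [->|] //=.
  by have := subsetP WA p pW; rewrite inE => ->.
exact: unimodular_equiv_flip A_marked W_dec W_adm pW p_min p_not_star.
Qed.

Lemma admissible_setD1 (W : {set T}) p : admissible W (~: A :\: W) ->
  (forall q, (q < p)%O -> q \notin W) -> admissible (W :\ p) (~: A :\: (W :\ p)).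
Proof.
move=> W_adm p_min u1 u2 /setD1P[_ u1W]; rewrite !inE negb_and negbK.
case/andP=> /orP[/eqP->|u2W] u2A u12; first by move: (p_min u1 u12); rewrite u1W.
by apply: (W_adm u1 u2 u1W) => //; rewrite !inE u2W.
Qed.

Lemma unimodular_equiv_setI (V W : {set T}) : admissible V (~: A :\: V) ->
  W \subset ~: A -> admissible W (~: A :\: W) ->
  (forall p, p \in W :\: V -> ~ star_elem p) -> unimodular_equiv (Q W) (Q (W :&: V)).
Proof.
move=> V_adm; move Hn : #|W :\: V| => n; elim: n W Hn => [|n IH] W Hn WA W_adm nstar.
  have /setIidPl-> : W \subset V by move/eqP: Hn; rewrite cards_eq0 setD_eq0.
  exact: unimodular_equiv_refl.
have [p0 p0WV] : exists p0, p0 \in W :\: V by apply/set0Pn; rewrite -card_gt0 Hn.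
have [p pWV p_min'] := @exists_minimal_in _ _ (mem (W :\: V)) p0 p0WV.
have {}pWV : p \in W :\: V := pWV; have /setDP[pW pV] := pWV.
have p_min q : (q < p)%O -> q \notin W.
  move=> qp; apply/negP => qW; have [qV|qV] := boolP (q \in V).
    by apply: (V_adm q p qV) => //; rewrite in_setD pV (subsetP WA).
  by have := p_min' q; rewrite /= in_setD qV qW qp => /(_ isT).
apply: unimodular_equiv_trans (unimodular_equiv_remove WA W_adm pW p_min (nstar p pWV)) _.
have -> : W :&: V = (W :\ p) :&: V.
  by apply/setP => r; rewrite !inE; case: eqVneq => // ->; rewrite (negbTE pV) andbF.
apply: IH; last by move=> q /setDP[/setD1P[_ qW] qV]; apply: nstar; rewrite inE qV.
- apply/eqP; rewrite -eqSS -Hn (cardsD1 p (W :\: V)) pWV eqSS; apply/eqP/eq_card => r.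
  by rewrite !inE; case: (r != p); case: (r \in V).
- exact: subset_trans (subD1set W p) WA.
- exact: admissible_setD1.
Qed.

End Decompositions.

Theorem theorem4p7 (R : realType) (d : Order.disp_t) (T : finPOrderType d)
    (A : {set T}) (lam : T -> nat) (U1 U2 V1 V2 : {set T}) :
  marked_poset A ->
  decomposition A U1 U2 -> admissible U1 U2 ->
  decomposition A V1 V2 -> admissible V1 V2 ->
  (U1, U2) <> (V1, V2) ->
  (forall p : T, star_elem p -> (p \in U1 <-> p \in V1)) ->
  unimodular_equiv (chain_order_polytope (R := R) (A := A) lam U1 U2)
                   (chain_order_polytope (R := R) (A := A) lam V1 V2).
Proof.
move=> A_marked dU U_adm dV V_adm _ same_stars.
have [U1A U2E] := decompositionE dU; have [V1A V2E] := decompositionE dV; subst U2 V2.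
have UV_stars p : p \in U1 :\: V1 -> ~ star_elem p.
  by case/setDP=> pU pV /same_stars[/(_ pU)]; rewrite (negbTE pV).
have VU_stars p : p \in V1 :\: U1 -> ~ star_elem p.
  by case/setDP=> pV pU /same_stars[_ /(_ pV)]; rewrite (negbTE pU).
have U_UV := unimodular_equiv_setI R lam A_marked V_adm U1A U_adm UV_stars.
have V_VU := unimodular_equiv_setI R lam A_marked U_adm V1A V_adm VU_stars.
rewrite setIC in V_VU; exact: unimodular_equiv_trans U_UV (unimodular_equiv_sym V_VU).
Qed.
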